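(* For every odd prime power $q$ and every $n\ge 1$, $$S_q(n)=S^{o}_q(n)+S^{o}_q(n-1)\qquad\text{and}\qquad B_q(n)=\sum_{i=0}^{\lfloor n/2\rfloor} q^{i}\,S_q(n-2i),$$ where $S^{o}_q(0)=S_q(0)=1$.
   Context: Let $q$ be an odd prime power. For $f$ monic of degree $n$ in $\mathbb{F}_q[T]$ put $b_q(f)=1$ if $f=A^2+TB^2$ for some $A,B\in\mathbb{F}_q[T]$ and $0$ otherwise, and $B_q(n)=\sum_f b_q(f)$ over monic $f$ of degree $n$. Call a monic squarefree polynomial $f\in\mathbb{F}_q[T]$ admissible if every root $z\in\overline{\mathbb{F}}_q$ of $f$ is a square in $\mathbb{F}_q(z)$ (equivalently, $T$ is a square modulo every irreducible factor of $f$). $S_q(n)$ is the number of admissible monic squarefree polynomials of degree $n$, and $S^{o}_q(n)$ the number of those with $f(0)\neq 0$. *)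

From HB Require Import structures.
From Stdlib Require Import ClassicalEpsilon.
From mathcomp Require Import all_boot all_order all_algebra all_field.
Set Implicit Arguments. Unset Strict Implicit. Unset Printing Implicit Defensive.
Import GRing.Theory.
Local Open Scope ring_scope.

Definition decP (P : Prop) : bool :=
  if excluded_middle_informative P then true else false.

(* The monic polynomial of degree n with lower coefficients c_0..c_{n-1}:
   c_0 + c_1 T + ... + c_{n-1} T^{n-1} + T^n.  This is a bijection between
   n.-tuple F and monic polynomials of degree n. *)
Definition mpoly (F : finFieldType) (n : nat) (c : n.-tuple F) : {poly F} :=
  Poly (rcons (tval c) 1).

Definition is_sum_AB (F : finFieldType) (f : {poly F}) : Prop :=
  exists A B : {poly F}, f = A ^+ 2 + 'X * B ^+ 2.

Definition squarefree_poly (F : finFieldType) (f : {poly F}) : Prop :=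
  forall g : {poly F}, (g * g %| f) -> (size g <= 1)%N.

Definition admissible (F : finFieldType) (f : {poly F}) : Prop :=
  f \is monic /\ squarefree_poly f /\
  forall p : {poly F}, p \is monic -> irreducible_poly p -> p %| f ->
    exists g : {poly F}, p %| g ^+ 2 - 'X.

Definition Bq (F : finFieldType) (n : nat) : nat :=
  #|[set c : n.-tuple F | decP (is_sum_AB (mpoly c))]|.

Definition Sq (F : finFieldType) (n : nat) : nat :=
  #|[set c : n.-tuple F | decP (admissible (mpoly c))]|.

Definition Soq (F : finFieldType) (n : nat) : nat :=
  #|[set c : n.-tuple F | decP (admissible (mpoly c) /\ (mpoly c).[0] != 0)]|.

(* Every monic f is uniquely D^2 h with D, h monic and h squarefree.  If
   f = A^2 + T B^2, then -T is a square modulo each irreducible factor p of h: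
   cancel the common factors of A and B (their squares divide D^2), after which
   p does not divide B and A B^-1 is a square root of -T modulo p.  Conversely,
   if p is monic and p | g^2 + T, pigeonhole yields (A, B) != 0 of degrees about
   deg p / 2 with A = g B (mod p); then p | A^2 + T B^2, a polynomial of degree at
   most deg p with square leading coefficient, so p itself is a sum.  As such
   sums are closed under products, B_q(n) counts the pairs (D, h) with h
   squarefree and -T a square modulo its factors; the substitution T -> -T maps
   these h bijectively onto the admissible polynomials.  Finally, an admissible f
   with f(0) = 0 is T g with g admissible and g(0) != 0. *)

From Pilot Require Import Defs.
From Stdlib Require Import Classical ClassicalEpsilon.
From HB Require Import structures.
From mathcomp Require Import all_boot all_order all_algebra all_field.
From mathcomp Require Import ring zify.
(* [ssrbool.decP] shadows [Defs.decP]; restore the latter. *)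
Import Pilot.Defs.

Set Implicit Arguments. Unset Strict Implicit. Unset Printing Implicit Defensive.
Import GRing.Theory.
Local Open Scope ring_scope.

Lemma decPP (P : Prop) : reflect P (decP P).
Proof. by rewrite /decP; case: excluded_middle_informative => H; constructor. Qed.

Lemma decP_andb (P : Prop) (b : bool) : decP (P /\ b) = decP P && b.
Proof. by apply/decPP/andP => [[/decPP ? ?]|[/decPP ? ?]]. Qed.

Lemma card_disjoint_cover (I T : finType) (B : {set T}) (S : I -> {set T}) :
  (forall i, S i \subset B) -> (forall c, c \in B -> exists i, c \in S i) ->
  (forall i j c, c \in S i -> c \in S j -> i = j) ->
  #|B| = (\sum_i #|S i|)%N.
Proof.
move=> sSB coverB disjS.
rewrite -sum1_card (eq_bigr (fun c => \sum_i (c \in S i) : nat)%N) => [|c Bc].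
  rewrite exchange_big; apply: eq_bigr => i _.
  rewrite -big_mkcondr -sum1_card; apply: eq_bigl => c.
  by rewrite andb_idl // => /(subsetP (sSB i)).
have [i ci] := coverB c Bc; rewrite (bigD1 i) //= ci big1 // => j ji.
by case: (boolP (c \in S j)) => // /(disjS _ _ _ ci) eij; rewrite eij eqxx in ji.
Qed.

Section FieldPoly.
Variable F : fieldType.
Implicit Types a b f p q : {poly F}.

Lemma irredp_dvdpM p a b : irreducible_poly p -> p %| a * b -> (p %| a) || (p %| b).
Proof.
move=> ip pab; have [//|pNa] /= := boolP (p %| a).
by rewrite -(@Gauss_dvdpr _ b a) // irreducible_poly_coprime.
Qed.

Lemma eqp_irredp p q : q %= p -> irreducible_poly p -> irreducible_poly q.
Proof.
move=> qp [sp ip]; split=> [|r sr rq]; first by rewrite (eqp_size qp).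
by rewrite (eqp_rtrans qp) ip // -(eqp_dvdr _ qp).
Qed.

Lemma exists_monic_eqp p : p != 0 -> exists2 q, q \is monic & q %= p.
Proof.
move=> p0; have lp0 : lead_coef p != 0 by rewrite lead_coef_eq0.
exists ((lead_coef p)^-1 *: p); first by rewrite monicE lead_coefZ mulVf.
by rewrite eqp_scale // invr_eq0.
Qed.

Lemma monic_size1 p : p \is monic -> (size p <= 1)%N -> p = 1.
Proof. by move=> mp /size1_polyC E; move/monicP: mp; rewrite E lead_coefC => ->. Qed.

Lemma size_mul_gt a b : a != 0 -> (1 < size b)%N -> (size a < size (a * b)%R)%N.
Proof.
move=> a0 sb; have b0 : b != 0 by rewrite -size_poly_gt0 ltnW.
rewrite size_mul //; move: a0; rewrite -size_poly_gt0.
by set m := size a; set k := size b; lia.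
Qed.

Lemma size_dvdp_lt a b : b != 0 -> a %| b -> ~~ (a %= b) -> (size a < size b)%N.
Proof. by move=> b0 ab; rewrite -dvdp_size_eqp // ltn_neqAle dvdp_leq // andbT. Qed.

Lemma exists_monic_irredp_factor f : (1 < size f)%N ->
  exists p, [/\ p \is monic, irreducible_poly p & p %| f].
Proof.
have [n lt_fn] := ubnP (size f); elim: n f lt_fn => // n IHn f lt_fn sf.
have f0 : f != 0 by rewrite -size_poly_gt0 ltnW.
have [irf|nirf] := classic (irreducible_poly f).
  have [p mp pf] := exists_monic_eqp f0.
  by exists p; rewrite (eqp_dvdl _ pf); split=> //; apply: eqp_irredp pf irf.
have [q [sq qf nq]] : exists q, [/\ size q != 1%N, q %| f & ~~ (q %= f)].
  apply: NNPP => noq; apply: nirf; split=> // q sq qf.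
  by apply/negPn/negP => nq; apply: noq; exists q.
have sq1 : (1 < size q)%N.
  have q0 : q != 0 by apply: contraNneq f0 => q0; rewrite -dvd0p -q0.
  by move: sq q0; rewrite -size_poly_gt0; case: (size q) => [|[]].
have [|p [mp ip pq]] := IHn q _ sq1; first by have := size_dvdp_lt f0 qf nq; lia.
by exists p; split=> //; apply: dvdp_trans pq qf.
Qed.

Lemma irredp_dvdpX p : irreducible_poly p -> p %| 'X -> p %= 'X.
Proof.
have := irredp_XsubC (0 : F); rewrite polyC0 subr0 => iX ip.
by apply: iX; rewrite neq_ltn ip.1 orbT.
Qed.

Lemma dvdpX_horner0 f : ('X %| f) = (f.[0] == 0).
Proof. by rewrite -['X]subr0 -polyC0 dvdp_XsubCl rootE. Qed.

End FieldPoly.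

Section Squarefree.
Variable F : finFieldType.
Implicit Types f g h p D : {poly F}.

Lemma squarefree_irredp_dvd h D p : squarefree_poly h -> irreducible_poly p ->
  p * p %| D ^+ 2 * h -> p %| D.
Proof.
move=> sqh ip ppDh; apply: contraT => pND.
have cpD : coprimep p D by rewrite irreducible_poly_coprime.
have cpp : coprimep (p * p) (D ^+ 2) by rewrite coprimepMl !coprimep_expr.
have := sqh p; rewrite -(Gauss_dvdpr h cpp) => /(_ ppDh).
by case: ip => sp _; rewrite leqNgt sp.
Qed.

Lemma squarefree_decomposition f : f \is monic ->
  exists D h, [/\ D \is monic, h \is monic, squarefree_poly h & f = D ^+ 2 * h].
Proof.
have [n lt] := ubnP (size f); elim: n f lt => // n IHn f lt mf.
have [sqf|nsqf] := classic (squarefree_poly f).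
  by exists 1, f; rewrite monic1 expr1n mul1r.
have [g [gf sg]] : exists g, g * g %| f /\ (1 < size g)%N.
  apply: NNPP => nog; apply: nsqf => g gf; rewrite leqNgt; apply/negP => sg.
  by apply: nog; exists g.
have g0 : g != 0 by rewrite -size_poly_gt0 ltnW.
have [m mm mg] := exists_monic_eqp g0.
have mdg : m %| g by rewrite (eqp_dvdl _ mg).
have mmf : m * m %| f := dvdp_trans (dvdp_mul mdg mdg) gf.
have Ef := divpK mmf; set f1 := f %/ (m * m) in Ef.
have mf1 : f1 \is monic by move: mf; rewrite -Ef monicMr // monicMl.
have [|D1 [h [mD1 mh sqh Ef1]]] := IHn f1 _ mf1.
  apply: leq_trans (ltnSE lt); rewrite -[in X in (_ < X)%N]Ef size_mul_gt ?monic_neq0 //.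
  by rewrite size_mul ?monic_neq0 // (eqp_size mg); set k := size g; lia.
exists (m * D1), h; split => //; first by rewrite monicMl.
by rewrite -Ef Ef1; ring.
Qed.

Lemma squarefree_decomposition_uniq D1 D2 h1 h2 :
  D1 \is monic -> D2 \is monic -> h1 \is monic -> h2 \is monic ->
  squarefree_poly h1 -> squarefree_poly h2 ->
  D1 ^+ 2 * h1 = D2 ^+ 2 * h2 -> D1 = D2 /\ h1 = h2.
Proof.
have [n lt] := ubnP (size D1); elim: n D1 D2 lt => // n IHn D1 D2 lt.
move=> mD1 mD2 mh1 mh2 sq1 sq2 E.
have [sD1|sD1] := leqP (size D1) 1.
  move: E; rewrite (monic_size1 mD1 sD1) expr1n mul1r => E.
  have sD2 : (size D2 <= 1)%N by apply: sq1; rewrite E -expr2 dvdp_mulr.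
  by move: E; rewrite (monic_size1 mD2 sD2) expr1n mul1r.
have [p [mp ip pD1]] := exists_monic_irredp_factor sD1.
have p0 := irredp_neq0 ip.
have pD2 : p %| D2.
  apply: (squarefree_irredp_dvd sq2 ip); rewrite -E dvdp_mulr //.
  by rewrite expr2 dvdp_mul.
have ED1 := divpK pD1; have ED2 := divpK pD2.
set D1' := D1 %/ p in ED1; set D2' := D2 %/ p in ED2.
have mD1' : D1' \is monic by move: mD1; rewrite -ED1 monicMr.
have mD2' : D2' \is monic by move: mD2; rewrite -ED2 monicMr.
have ltD1' : (size D1' < n)%N.
  apply: leq_trans (ltnSE lt); rewrite -[in X in (_ < X)%N]ED1.
  exact: size_mul_gt (monic_neq0 mD1') ip.1.
have E' : D1' ^+ 2 * h1 = D2' ^+ 2 * h2.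
  apply: (mulIf (mulf_neq0 p0 p0)); transitivity (D1 ^+ 2 * h1).
    by rewrite -ED1; ring.
  by rewrite E -ED2; ring.
have [eD' ->] := IHn D1' D2' ltD1' mD1' mD2' mh1 mh2 sq1 sq2 E'.
by rewrite -ED1 -ED2 eD'.
Qed.

End Squarefree.

Section CoefficientTuples.
Variable R : nzRingType.
Implicit Types f g : {poly R}.

Definition low_coefs n f : n.-tuple R :=
  Tuple (introT eqP (size_mkseq (fun i => f`_i) n)).

Lemma nth_low_coefs n f i : (i < n)%N -> (low_coefs n f)`_i = f`_i.
Proof. exact: nth_mkseq. Qed.

Lemma low_coefs_inj n f g : (size f <= n)%N -> (size g <= n)%N ->
  low_coefs n f = low_coefs n g -> f = g.
Proof.
move=> sf sg e; apply/polyP => i; have [lt_in|le_ni] := ltnP i n.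
  by rewrite -!(nth_low_coefs _ lt_in) e.
by rewrite !nth_default // (leq_trans _ le_ni).
Qed.

Lemma Poly_tuple_inj k (x y : k.-tuple R) : Poly x = Poly y -> x = y.
Proof.
move=> e; apply: val_inj; apply: (@eq_from_nth _ 0); rewrite ?size_tuple // => i _.
by rewrite -(coef_Poly x) -(coef_Poly y) e.
Qed.

Lemma size_Poly_tuple k (x : k.-tuple R) : (size (Poly x) <= k)%N.
Proof. by apply: leq_trans (size_Poly _) _; rewrite size_tuple. Qed.

End CoefficientTuples.

Section MonicEncoding.
Variable F : finFieldType.

Lemma mpoly_seq n (c : n.-tuple F) : mpoly c = rcons c 1 :> seq F.
Proof. by rewrite /mpoly (@PolyK _ 0) // last_rcons oner_neq0. Qed.

Lemma size_mpoly n (c : n.-tuple F) : size (mpoly c) = n.+1.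
Proof. by rewrite mpoly_seq size_rcons size_tuple. Qed.

Lemma coef_mpoly n (c : n.-tuple F) i :
  (mpoly c)`_i = if (i < n)%N then c`_i else (i == n)%:R.
Proof. by rewrite mpoly_seq nth_rcons size_tuple; do 2?case: ifP. Qed.

Lemma mpoly_monic n (c : n.-tuple F) : mpoly c \is monic.
Proof. by rewrite monicE /lead_coef size_mpoly coef_mpoly ltnn eqxx. Qed.

Lemma mpolyK n (c : n.-tuple F) : low_coefs n (mpoly c) = c.
Proof.
apply: val_inj; apply: (@eq_from_nth _ 0); rewrite /= ?size_mkseq ?size_tuple //.
by move=> i lt_in; rewrite nth_mkseq // coef_mpoly lt_in.
Qed.

Lemma low_coefsK n (f : {poly F}) : f \is monic -> size f = n.+1 ->
  mpoly (low_coefs n f) = f.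
Proof.
move=> mf sf; apply/polyP => i; rewrite coef_mpoly.
have [lt_in|le_ni] := ltnP i n; first by rewrite nth_low_coefs.
have [->|ne_in] := eqVneq i n; first by move/monicP: mf; rewrite /lead_coef sf.
by rewrite nth_default // sf; lia.
Qed.

End MonicEncoding.

Section SumsAB.
Variable F : finFieldType.
Implicit Types a b f g h p A B D : {poly F}.

(* Brahmagupta's identity: the norm form of F[T][sqrt(-T)] is multiplicative. *)
Lemma is_sum_ABM a b : is_sum_AB a -> is_sum_AB b -> is_sum_AB (a * b).
Proof.
move=> [A [B ->]] [C [D ->]]; exists (A * C - 'X * B * D), (A * D + B * C); ring.
Qed.

Lemma is_sum_AB_sqr D : is_sum_AB (D ^+ 2).
Proof. by exists D, 0; rewrite expr0n mulr0 addr0. Qed.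

(* No cancellation can occur: [A ^+ 2] has even and ['X * B ^+ 2] odd degree. *)
Lemma lead_coef_sum_AB A B : (A != 0) || (B != 0) ->
  exists2 s, s != 0 & lead_coef (A ^+ 2 + 'X * B ^+ 2) = s ^+ 2.
Proof.
have lcXB : lead_coef ('X * B ^+ 2) = lead_coef B ^+ 2.
  by rewrite lead_coefM lead_coefX mul1r lead_coef_exp.
have [-> /= B0|A0 _] := eqVneq A 0.
  by exists (lead_coef B); rewrite ?lead_coef_eq0 // expr0n add0r.
have [->|B0] := eqVneq B 0.
  by exists (lead_coef A); rewrite ?lead_coef_eq0 // expr0n mulr0 addr0 lead_coef_exp.
have sA : size (A ^+ 2) = ((size A).-1 * 2).+1.
  by rewrite -size_exp prednK // size_poly_gt0 expf_neq0.
have sB : size ('X * B ^+ 2) = ((size B).-1 * 2).+2.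
  by rewrite mulrC size_mulX ?expf_neq0 // -size_exp prednK // size_poly_gt0 expf_neq0.
have [le_AB|lt_BA] := leqP (size A).-1 (size B).-1.
  exists (lead_coef B); rewrite ?lead_coef_eq0 //.
  by rewrite lead_coefDr // sA sB; lia.
exists (lead_coef A); rewrite ?lead_coef_eq0 //.
by rewrite lead_coefDl ?lead_coef_exp // sA sB; lia.
Qed.

Lemma size_sum_AB_le A B k : (size A <= k./2.+1)%N -> (size B <= uphalf k)%N ->
  (size (A ^+ 2 + 'X * B ^+ 2)%R <= k.+1)%N.
Proof.
move=> sA sB; apply: leq_trans (size_polyD _ _) _; rewrite geq_max.
have sA2 := size_polyMleq A A; have sB2 := size_polyMleq B B; rewrite -!expr2 in sA2 sB2.
have sXB2 : (size ('X * B ^+ 2)%R <= (size (B ^+ 2)).+1)%N.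
  by apply: leq_trans (size_polyMleq _ _) _; rewrite size_polyX.
have := odd_double_half k; have := leq_b1 (odd k); rewrite uphalf_half in sB.
move: (size A) (size B) (size (A ^+ 2)) (size (B ^+ 2)) (size ('X * B ^+ 2)%R)
  (odd k) (k./2) sA sB sA2 sB2 sXB2 => a b a2 b2 xb2 o h *.
by apply/andP; split; lia.
Qed.

(* Bezout [u p + v B = 1] makes [A v] a square root of [-'X] modulo [p]. *)
Lemma irredp_dvd_sum_AB_sqrDX p A B : p %| A ^+ 2 + 'X * B ^+ 2 -> ~~ (p %| B) ->
  irreducible_poly p -> exists g, p %| g ^+ 2 + 'X.
Proof.
move=> pf pNB ip; have : coprimep p B by rewrite irreducible_poly_coprime.
case/Bezout_eq1_coprimepP => [[u v] /= Huv]; exists (A * v).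
have -> : (A * v) ^+ 2 + 'X = v ^+ 2 * (A ^+ 2 + 'X * B ^+ 2)
    + 'X * (1 + v * B) * (u * p) + 'X * (1 + v * B) * (1 - (u * p + v * B)) by ring.
by rewrite Huv subrr mulr0 addr0 dvdp_add ?dvdp_mull.
Qed.

Lemma sum_AB_dvd_irredp_sqrDX f D h p : is_sum_AB f -> f != 0 -> f = D ^+ 2 * h ->
  squarefree_poly h -> irreducible_poly p -> p %| h -> exists g, p %| g ^+ 2 + 'X.
Proof.
have [n lt_fn] := ubnP (size f); elim: n f D lt_fn => // n IHn f D lt_fn.
move=> [A [B Ef]] f0 EfD sqh ip ph; have p0 := irredp_neq0 ip.
have pf : p %| f by rewrite EfD dvdp_mull.
have [pB|pNB] := boolP (p %| B); last first.
  by apply: (@irredp_dvd_sum_AB_sqrDX p A B) => //; rewrite -Ef.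
have pA : p %| A.
  have pAA : p %| A * A.
    have -> : A * A = f - 'X * (B * B) by rewrite Ef; ring.
    by rewrite dvdp_sub // !dvdp_mull.
  by case/orP: (irredp_dvdpM ip pAA).
have EA := divpK pA; have EB := divpK pB.
set f' := (A %/ p) ^+ 2 + 'X * (B %/ p) ^+ 2.
have Ef' : f = f' * (p * p) by rewrite Ef -EA -EB /f'; ring.
have pD : p %| D by apply: (squarefree_irredp_dvd sqh ip); rewrite -EfD Ef' dvdp_mull.
have ED := divpK pD.
have f'0 : f' != 0 by apply: contra_neq f0; rewrite Ef' => ->; rewrite mul0r.
have lt_f'n : (size f' < n)%N.
  apply: leq_trans (ltnSE lt_fn); rewrite [in X in (_ < X)%N]Ef'.
  apply: size_mul_gt f'0 _; rewrite size_mul //; case: ip; set k := size p; lia.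
have Ef'D : f' = (D %/ p) ^+ 2 * h.
  by apply: (mulIf (mulf_neq0 p0 p0)); rewrite -Ef' EfD -{1}ED; ring.
by apply: (IHn f' (D %/ p)) => //; exists (A %/ p), (B %/ p).
Qed.

Lemma exists_small_dvdp_subM p g (a b : nat) : p != 0 -> (size p <= a + b)%N ->
  exists A B, [/\ (A != 0) || (B != 0), (size A <= a)%N, (size B <= b)%N
                & p %| A - g * B].
Proof.
move=> p0 sp.
pose phi (x : a.-tuple F * b.-tuple F) : (size p).-1.-tuple F :=
  low_coefs _ ((Poly x.1 - g * Poly x.2) %% p).
have : ~~ injectiveb phi.
  apply/injectiveP => /leq_card; rewrite card_prod !card_tuple -expnD.
  rewrite leq_exp2l ?card_finNzRing_gt1 //.
  by move: sp; rewrite -size_poly_gt0 in p0; lia.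
case/injectivePn => [[x1 y1] [[x2 y2] nxy /low_coefs_inj e]].
exists (Poly x1 - Poly x2), (Poly y1 - Poly y2); split.
- apply: contraR nxy; rewrite negb_or !negbK !subr_eq0 => /andP[/eqP e1 /eqP e2].
  by rewrite (Poly_tuple_inj e1) (Poly_tuple_inj e2).
- by rewrite (leq_trans (size_polyD _ _)) // size_polyN geq_max !size_Poly_tuple.
- by rewrite (leq_trans (size_polyD _ _)) // size_polyN geq_max !size_Poly_tuple.
rewrite /dvdp -subr_eq0; have -> : Poly x1 - Poly x2 - g * (Poly y1 - Poly y2)
  = (Poly x1 - g * Poly y1) - (Poly x2 - g * Poly y2) by ring.
by rewrite modpD modpN e ?subrr // -ltnS prednK ?ltn_modp // size_poly_gt0.
Qed.

(* A pigeonhole pair [(A, B)] with [A = g B (mod p)] gives [A^2 + X B^2 = 0 (mod p)]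
   with degree at most [deg p], hence a scalar multiple of [p]. *)
Lemma monic_dvdp_sqrDX_sum_AB p g : p \is monic -> p %| g ^+ 2 + 'X -> is_sum_AB p.
Proof.
move=> mp pg; have p0 := monic_neq0 mp; set k := (size p).-1.
have sp : size p = k.+1 by rewrite prednK // size_poly_gt0.
have [|A [B [AB0 sA sB pAB]]] := @exists_small_dvdp_subM p g k./2.+1 (uphalf k) p0.
  by rewrite sp uphalf_half; have := odd_double_half k; lia.
set N := A ^+ 2 + 'X * B ^+ 2.
have pN : p %| N.
  have -> : N = (A - g * B) * (A + g * B) + B ^+ 2 * (g ^+ 2 + 'X) by rewrite /N; ring.
  by apply: dvdp_add; [apply: dvdp_mulr | apply: dvdp_mull].
have [s s0 lcN] := lead_coef_sum_AB AB0.
have N0 : N != 0 by rewrite -lead_coef_eq0 lcN expf_neq0.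
have pN_eqp : p %= N by rewrite -dvdp_size_eqp // eqn_leq dvdp_leq // sp size_sum_AB_le.
have := eqp_eq pN_eqp; rewrite (monicP mp) scale1r lcN -mul_polyC => EN.
exists (s^-1%:P * A), (s^-1%:P * B).
transitivity (s^-1%:P ^+ 2 * N); last by rewrite /N; ring.
by rewrite -EN mulrA -rmorphXn -rmorphM -exprMn mulVf // expr1n mul1r.
Qed.

Lemma sum_AB_of_irredp_factors h : h \is monic ->
  (forall p, p \is monic -> irreducible_poly p -> p %| h -> exists g, p %| g ^+ 2 + 'X) ->
  is_sum_AB h.
Proof.
have [n lt_hn] := ubnP (size h); elim: n h lt_hn => // n IHn h lt_hn mh Hh.
have [sh|sh] := leqP (size h) 1.
  by rewrite (monic_size1 mh sh) -(expr1n _ 2); apply: is_sum_AB_sqr.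
have [p [mp ip ph]] := exists_monic_irredp_factor sh.
have [g pg] := Hh p mp ip ph.
have Eh := divpK ph; set h' := h %/ p in Eh.
have mh' : h' \is monic by move: mh; rewrite -Eh monicMr.
rewrite -Eh; apply: is_sum_ABM (monic_dvdp_sqrDX_sum_AB mp pg); apply: IHn => //.
  apply: leq_trans (ltnSE lt_hn); rewrite -[in X in (_ < X)%N]Eh.
  exact: size_mul_gt (monic_neq0 mh') ip.1.
by move=> q mq iq qh'; apply: Hh; rewrite // -Eh dvdp_mulr.
Qed.

End SumsAB.

Section Twist.
Variable F : fieldType.
Implicit Types f g p q : {poly F}.

(* [T -> -T], rescaled by [(-1)^deg f] so that monic polynomials stay monic. *)
Definition twist f := (-1) ^+ (size f).-1 *: (f \Po - 'X).

Lemma size_comp_polyNX f : size (f \Po - 'X) = size f.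
Proof. by apply: size_comp_poly2; rewrite size_polyN size_polyX. Qed.

Lemma comp_polyNXK f : (f \Po - 'X) \Po - 'X = f.
Proof. by rewrite -comp_polyA raddfN /= comp_polyX opprK comp_polyXr. Qed.

Lemma dvdp_comp_polyNX p f : (p \Po - 'X %| f \Po - 'X) = (p %| f).
Proof.
apply/idP/idP => [|/(dvdp_comp_poly (- 'X)) //].
by move/(dvdp_comp_poly (- 'X)); rewrite !comp_polyNXK.
Qed.

Lemma eqp_twist f : twist f %= f \Po - 'X.
Proof. by rewrite eqp_scale // signr_eq0. Qed.

Lemma size_twist f : size (twist f) = size f.
Proof. by rewrite (eqp_size (eqp_twist f)) size_comp_polyNX. Qed.

Lemma twistK f : twist (twist f) = f.
Proof.
rewrite {1}/twist size_twist /twist comp_polyZ comp_polyNXK scalerA -exprMn.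
by rewrite mulrNN mulr1 expr1n scale1r.
Qed.

Lemma monic_twist f : f \is monic -> twist f \is monic.
Proof.
move=> mf; rewrite monicE lead_coefZ lead_coef_comp ?size_polyN ?size_polyX //.
by rewrite lead_coefN lead_coefX (monicP mf) mul1r -exprMn mulrNN mulr1 expr1n.
Qed.

Lemma irredp_twist p : irreducible_poly p -> irreducible_poly (twist p).
Proof.
move=> [sp ip]; apply: eqp_irredp (eqp_twist p) _.
split=> [|q sq qp]; first by rewrite size_comp_polyNX.
rewrite -[q]comp_polyNXK /eqp !dvdp_comp_polyNX -/(_ %= _); apply: ip.
  by rewrite size_comp_polyNX.
by rewrite -dvdp_comp_polyNX comp_polyNXK.
Qed.

Lemma dvdp_twist p f : (twist p %| twist f) = (p %| f).
Proof.
by rewrite (eqp_dvdl _ (eqp_twist p)) (eqp_dvdr _ (eqp_twist f)) dvdp_comp_polyNX.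
Qed.

End Twist.

Section TwistedAdmissibility.
Variable F : finFieldType.
Implicit Types f g h p : {poly F}.

Definition admissible_for (s : F) f := [/\ f \is monic, squarefree_poly f &
  forall p, p \is monic -> irreducible_poly p -> p %| f ->
    exists g, p %| g ^+ 2 - s *: 'X].

Lemma admissibleE f : admissible f <-> admissible_for 1 f.
Proof.
split=> [[mf [sqf Hf]]|[mf sqf Hf]]; do ?split=> //; move=> p mp ip pf;
  by have [g pg] := Hf p mp ip pf; exists g; rewrite scale1r in pg *.
Qed.

Lemma admissible_forN1P f : admissible_for (-1) f <-> [/\ f \is monic, squarefree_poly f &
  forall p, p \is monic -> irreducible_poly p -> p %| f -> exists g, p %| g ^+ 2 + 'X].
Proof.
have sqrDX g : g ^+ 2 - (-1) *: 'X = g ^+ 2 + 'X by rewrite scaleN1r opprK.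
split=> [[mf sqf Hf]|[mf sqf Hf]]; split=> // p mp ip pf;
  by have [g pg] := Hf p mp ip pf; exists g; rewrite sqrDX in pg *.
Qed.

Lemma squarefree_twist f : squarefree_poly f -> squarefree_poly (twist f).
Proof.
move=> sqf g gg; rewrite -size_comp_polyNX; apply: sqf.
by rewrite -comp_polyM -[f]comp_polyNXK dvdp_comp_polyNX -(eqp_dvdr _ (eqp_twist f)).
Qed.

Lemma admissible_for_twist s f : admissible_for s f -> admissible_for (- s) (twist f).
Proof.
case=> mf sqf Hf; split; [exact: monic_twist | exact: squarefree_twist |].
move=> p mp ip pf; rewrite -[p]twistK in pf *; rewrite dvdp_twist in pf.
have [g pg] := Hf _ (monic_twist mp) (irredp_twist ip) pf.
exists (g \Po - 'X); rewrite (eqp_dvdl _ (eqp_twist _)) -dvdp_comp_polyNX comp_polyNXK.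
rewrite comp_polyB comp_polyZ comp_polyX comp_polyM comp_polyNXK -expr2.
by rewrite scalerN scaleNr opprK.
Qed.

Lemma admissible_for_mulX s g : g.[0] != 0 ->
  admissible_for s (g * 'X) <-> admissible_for s g.
Proof.
move=> g0; have XNg : ~~ ('X %| g) by rewrite dvdpX_horner0.
split=> [[mgX sqgX HgX]|[mg sqg Hg]].
  split=> [|h hh|p mp ip pg]; first by rewrite -(monicMr g (monicX F)).
    by apply: sqgX; rewrite dvdp_mulr.
  by apply: HgX; rewrite ?dvdp_mulr.
split=> [|h hh|p mp ip]; first by rewrite monicMl ?monicX.
  rewrite leqNgt; apply/negP => /exists_monic_irredp_factor [r [_ ir rh]].
  have rrgX : r * r %| g * 'X := dvdp_trans (dvdp_mul rh rh) hh.
  have [rX|rNX] := boolP (r %| 'X).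
    have rXr := irredp_dvdpX ir rX.
    have rXX : r * r %= 'X * 'X := eqp_trans (eqp_mulr r rXr) (eqp_mull 'X rXr).
    by move: rrgX; rewrite (eqp_dvdl _ rXX) dvdp_mul2r ?polyX_eq0 // (negPf XNg).
  have crX : coprimep (r * r) 'X by rewrite coprimepMl andbb irreducible_poly_coprime.
  by move: rrgX; rewrite (Gauss_dvdpl g crX) => /sqg; rewrite leqNgt ir.1.
move=> /(irredp_dvdpM ip) /orP [pg|pX]; first exact: Hg.
have -> : p = 'X by apply/eqP; rewrite -eqp_monic ?monicX ?irredp_dvdpX.
by exists 0; rewrite expr0n sub0r -scaleNr -mul_polyC dvdp_mull.
Qed.

Lemma admissible_mulX g : admissible (g * 'X) <-> admissible g /\ g.[0] != 0.
Proof.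
have [g0|g00] := eqVneq g.[0] 0; last first.
  have [H1 H2] := admissible_for_mulX 1 g00; rewrite !admissibleE.
  by split=> [/H1|[/H2]].
split=> [[_ [sqgX _]]|[_ /eqP //]]; have : 'X * 'X %| g * 'X.
  by rewrite dvdp_mul2r ?polyX_eq0 // dvdpX_horner0 g0.
by move/sqgX; rewrite size_polyX.
Qed.

End TwistedAdmissibility.

Section Counting.
Variable F : finFieldType.

Lemma mpoly_cons m x (c : m.-tuple F) : mpoly [tuple of x :: c] = mpoly c * 'X + x%:P.
Proof. by rewrite /mpoly /= cons_poly_def. Qed.

Lemma Sq_split m : Sq F m.+1 = (Soq F m.+1 + Soq F m)%N.
Proof.
rewrite /Sq /Soq -(cardsID [set c : m.+1.-tuple F | (mpoly c).[0] != 0]); congr (_ + _)%N.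
  by apply: eq_card => c; rewrite !inE decP_andb.
have cons0_inj : injective (fun c : m.-tuple F => [tuple of 0 :: c]).
  by move=> c c' /(congr1 val) [] /val_inj.
rewrite -(card_imset _ cons0_inj); apply: eq_card => c; rewrite !inE.
apply/andP/imsetP => [[c0 /decPP adm_c]|[c' + ->]].
  have Ec : c = [tuple of 0 :: behead_tuple c].
    rewrite [LHS]tuple_eta; congr [tuple of _ :: _]; move: c0; rewrite negbK => /eqP.
    by rewrite horner_coef0 coef_mpoly /= => <-; rewrite /thead (tnth_nth 0).
  exists (behead_tuple c); rewrite // inE; apply/decPP.
  by rewrite -admissible_mulX -[_ * 'X]addr0 -polyC0 -mpoly_cons -Ec.
rewrite inE => /decPP /admissible_mulX adm_c'.
by rewrite mpoly_cons polyC0 addr0 hornerMX mulr0 eqxx; split=> //; apply/decPP.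
Qed.

Definition admissibleN1_tuples k :=
  [set c : k.-tuple F | decP (admissible_for (-1) (mpoly c))].

Lemma card_admissibleN1_tuples k : #|admissibleN1_tuples k| = Sq F k.
Proof.
pose tw (c : k.-tuple F) := low_coefs k (twist (mpoly c)).
have mpoly_tw c : mpoly (tw c) = twist (mpoly c).
  by rewrite low_coefsK ?monic_twist ?mpoly_monic // size_twist size_mpoly.
have twK : involutive tw by move=> c; rewrite /tw mpoly_tw twistK mpolyK.
rewrite /Sq -(card_preimset _ (inv_inj twK)); apply: eq_card => c.
rewrite !inE mpoly_tw; apply/decPP/decPP => [/admissible_for_twist|/admissibleE].
  by rewrite opprK twistK => /admissibleE.
exact: admissible_for_twist.
Qed.

Lemma mpoly_sqrM n i (D : i.-tuple F) (h : (n - i.*2).-tuple F) : (i.*2 <= n)%N ->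
  mpoly (low_coefs n (mpoly D ^+ 2 * mpoly h)) = mpoly D ^+ 2 * mpoly h.
Proof.
move=> le_2in; have mD := mpoly_monic D; have mh := mpoly_monic h.
rewrite low_coefsK ?monicMl ?monic_exp // size_Mmonic ?monic_neq0 ?monic_exp //.
by rewrite expr2 size_Mmonic ?monic_neq0 // !size_mpoly; lia.
Qed.

Definition sqr_mul_tuples n i : {set n.-tuple F} :=
  [set low_coefs n (mpoly x.1 ^+ 2 * mpoly x.2)
  | x in setX [set: i.-tuple F] (admissibleN1_tuples (n - i.*2))].

Lemma sqr_mul_tuplesP n i c : (i.*2 <= n)%N -> c \in sqr_mul_tuples n i ->
  exists (D : i.-tuple F), exists2 h, admissible_for (-1) h & mpoly c = mpoly D ^+ 2 * h.
Proof.
move=> le_2in /imsetP [[D h]] /setXP [_]; rewrite inE => /decPP adm_h -> /=.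
by exists D; exists (mpoly h); rewrite ?mpoly_sqrM.
Qed.

Lemma card_sqr_mul_tuples n i : (i.*2 <= n)%N ->
  #|sqr_mul_tuples n i| = (#|F| ^ i * Sq F (n - i.*2))%N.
Proof.
move=> le_2in; rewrite card_in_imset => [|[D1 h1] [D2 h2]].
  by rewrite cardsX cardsT card_tuple card_admissibleN1_tuples.
move=> /setXP [_]; rewrite inE => /decPP [mh1 sqh1 _].
move=> /setXP [_]; rewrite inE => /decPP [mh2 sqh2 _] /= /(congr1 (@mpoly F n)).
rewrite !mpoly_sqrM // => E.
have [eD eh] := squarefree_decomposition_uniq (mpoly_monic D1) (mpoly_monic D2) mh1 mh2
  sqh1 sqh2 E.
by rewrite -(mpolyK D1) -(mpolyK h1) eD eh !mpolyK.
Qed.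

Lemma sqr_mul_tuples_sum_AB n i c : (i.*2 <= n)%N -> c \in sqr_mul_tuples n i ->
  is_sum_AB (mpoly c).
Proof.
move=> le_2in /(sqr_mul_tuplesP le_2in) [D [h /admissible_forN1P [mh _ Hh] ->]].
exact: is_sum_ABM (is_sum_AB_sqr _) (sum_AB_of_irredp_factors mh Hh).
Qed.

Lemma sqr_mul_tuples_uniq n i j c : (i.*2 <= n)%N -> (j.*2 <= n)%N ->
  c \in sqr_mul_tuples n i -> c \in sqr_mul_tuples n j -> i = j.
Proof.
move=> le_2in le_2jn /(sqr_mul_tuplesP le_2in) [D1 [h1 [mh1 sqh1 _] E1]].
move=> /(sqr_mul_tuplesP le_2jn) [D2 [h2 [mh2 sqh2 _] E2]].
have [eD _] := squarefree_decomposition_uniq (mpoly_monic D1) (mpoly_monic D2) mh1 mh2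
  sqh1 sqh2 (etrans (esym E1) E2).
by have := congr1 (fun p : {poly F} => size p) eD; rewrite /= !size_mpoly => -[].
Qed.

Lemma sum_AB_sqr_mul_tuples n c : is_sum_AB (mpoly c) ->
  exists i : 'I_n./2.+1, c \in sqr_mul_tuples n i.
Proof.
move=> sum_c; have [D [h [mD mh sqh Ec]]] := squarefree_decomposition (mpoly_monic c).
have admh : admissible_for (-1) h.
  apply/admissible_forN1P; split=> // p _ ip ph.
  exact: sum_AB_dvd_irredp_sqrDX sum_c (monic_neq0 (mpoly_monic c)) Ec sqh ip ph.
set i := (size D).-1.
have sD : size D = i.+1 by rewrite /i prednK // size_poly_gt0 monic_neq0.
have h0 : (0 < size h)%N by rewrite size_poly_gt0 monic_neq0.
have sc : n.+1 = (i.*2 + size h)%N.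
  rewrite -(size_mpoly c) Ec size_Mmonic ?monic_neq0 ?monic_exp // expr2.
  by rewrite size_Mmonic ?monic_neq0 // sD; set k := size h; lia.
have le_2in : (i.*2 <= n)%N by move: sc h0; set k := size h; lia.
have sh : size h = (n - i.*2).+1 by move: sc h0; set k := size h; lia.
have lt_i : (i < n./2.+1)%N by rewrite ltnS geq_half_double.
exists (Ordinal lt_i); apply/imsetP; exists (low_coefs i D, low_coefs (n - i.*2) h).
  by rewrite !inE /= low_coefsK //; apply/decPP.
by rewrite /= !low_coefsK // -Ec mpolyK.
Qed.

Lemma Bq_decomposition n : Bq F n = (\sum_(i < n./2.+1) #|F| ^ i * Sq F (n - i.*2))%N.
Proof.
have le_2in (i : 'I_n./2.+1) : (i.*2 <= n)%N by rewrite -geq_half_double -ltnS.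
rewrite (eq_bigr _ (fun i _ => esym (card_sqr_mul_tuples (le_2in i)))).
apply: card_disjoint_cover => [i|c|i j c ci cj].
- apply/subsetP => c /(sqr_mul_tuples_sum_AB (le_2in i)) sum_c.
  by rewrite inE; apply/decPP.
- by rewrite inE => /decPP /sum_AB_sqr_mul_tuples.
- exact/val_inj/(sqr_mul_tuples_uniq (le_2in i) (le_2in j) ci cj).
Qed.

End Counting.

Theorem mainTheorem4 (F : finFieldType) (n : nat) :
  odd #|F| -> (0 < n)%N ->
  Sq F n = (Soq F n + Soq F n.-1)%N /\
  Bq F n = (\sum_(i < n./2.+1) #|F| ^ i * Sq F (n - i.*2))%N.
Proof.
move=> _; case: n => // m _.
by split; [exact: Sq_split | exact: Bq_decomposition].
Qed.
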